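(* Let $n\ge 3$ and $f=x^n+a_{n-1}x^{n-1}+\cdots+a_0\in\mathbb{C}[x]$ with roots $r_1,\ldots,r_n$ (with multiplicity). Define the polynomials \[f_1(x,y)=\frac{f(y)-f(x)}{y-x},\qquad f_3(x,y)=\frac{f(y)-2f\left(\frac{x+y}{2}\right)+f(x)}{\frac{(y-x)^2}{2}}.\] Let $D_2=\prod_{1\le i,j,k\le n,\ i<j,\ j\ne k,\ k\ne i}(2r_k-r_i-r_j)$. Then $\operatorname{res}(f,\operatorname{res}(f_1,f_3,y),x)=0$ if and only if $D_2=0$.
   Context: The quotients defining $f_1,f_3$ are polynomials in $x,y$. $\operatorname{res}$ denotes the Sylvester resultant with respect to the indicated variable. *)

From HB Require Import structures.
From mathcomp Require Import all_boot all_order all_algebra.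
Set Implicit Arguments. Unset Strict Implicit. Unset Printing Implicit Defensive.
Import Order.TTheory GRing.Theory Num.Theory.
Local Open Scope ring_scope.

(* Bivariate polynomials are {poly {poly C}}: the OUTER variable is y,
   the INNER variable (coefficients' variable) is x. *)
Section Bivariate.
Variable C : fieldType.

Definition liftC2 (f : {poly C}) : {poly {poly C}} := map_poly (fun c : C => c%:P) f.

Definition varx : {poly {poly C}} := ('X : {poly C})%:P.
Definition vary : {poly {poly C}} := 'X.

Definition f_at_y (f : {poly C}) : {poly {poly C}} := liftC2 f \Po vary.
Definition f_at_x (f : {poly C}) : {poly {poly C}} := liftC2 f \Po varx.
Definition f_at_mid (f : {poly C}) : {poly {poly C}} :=
  liftC2 f \Po ((varx + vary) * ((2%:R)^-1)%:P%:P).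

(* f_1(x,y) = (f(y) - f(x)) / (y - x)  (exact division by the monic y - x) *)
Definition f1 (f : {poly C}) : {poly {poly C}} :=
  (f_at_y f - f_at_x f) %/ (vary - varx).

Definition f3 (f : {poly C}) : {poly {poly C}} :=
  (2%:R%:P%:P * (f_at_y f - 2%:R%:P%:P * f_at_mid f + f_at_x f))
    %/ ((vary - varx) ^+ 2).

End Bivariate.

Definition D2 (C : fieldType) (n : nat) (r : 'I_n -> C) : C :=
  \prod_(i < n) \prod_(j < n) \prod_(k < n | (i < j)%N && (j != k) && (k != i))
     (2%:R * r k - r i - r j).

From HB Require Import structures.
From mathcomp Require Import all_boot all_order all_algebra.
From mathcomp Require Import ring.
Set Implicit Arguments. Unset Strict Implicit. Unset Printing Implicit Defensive.
Import Order.TTheory GRing.Theory Num.Theory.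
Local Open Scope ring_scope.

(* Put R(x) := res_y(f1, f3). As f is monic with roots r_i, res(f, R) = 0 iff
   R(r_i) = 0 for some i.  Specialising x := r_i commutes with the resultant,
   because a degree count shows that the leading y-coefficients of f1 and f3 do
   not vanish at r_i (for f3 this uses characteristic 0).  Now f1(r_i, y) =
   f(y) / (y - r_i) = prod_(k <> i) (y - r_k), while
   f3(r_i, y) (y - r_i)^2 = 2 (f(y) - 2 f((r_i + y) / 2)); writing
   f = (y - r_i) (y - r_j) q_ij, the value of f3(r_i, y) at y = r_j is
   q_ij((r_i + r_j) / 2).  So R(r_i) = 0 iff some r_k, k <> i, j, is the midpoint
   of r_i and some r_j, j <> i, i.e. iff a factor of D_2 vanishes. *)

Local Notation at_x a := (map_poly (horner_eval a)).

Lemma map_divp_monic (R S : idomainType) (g : {rmorphism R -> S}) (p d : {poly R}) :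
  d \is monic -> map_poly g (p %/ d) = map_poly g p %/ map_poly g d.
Proof.
move=> mon_d; have mon_gd : map_poly g d \is monic by rewrite monic_map.
apply: (Pdiv.IdomainUnit.divpP (p := map_poly g p) _ (r := map_poly g (p %% d))).
- by rewrite (eqP mon_gd) unitr1.
- by rewrite {1}(Pdiv.IdomainMonic.divp_eq mon_d p) rmorphD rmorphM.
- rewrite [size (map_poly g d)]size_map_poly_id0 ?(eqP mon_d) ?rmorph1 ?oner_neq0 //.
  by rewrite /map_poly; apply: leq_ltn_trans (size_poly _ _) _; rewrite ltn_modp monic_neq0.
Qed.

Lemma lead_coef_map_neq0 (R S : nzRingType) (g : {additive R -> S}) (p : {poly R}) :
  (size p <= size (map_poly g p))%N -> p != 0 -> g (lead_coef p) != 0.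
Proof.
move=> le_p_gp p_neq0.
have size_gp : size (map_poly g p) = size p by apply/eqP; rewrite eqn_leq le_p_gp size_poly.
rewrite lead_coefE -coef_map -size_gp -lead_coefE lead_coef_eq0 -size_poly_gt0 size_gp.
by rewrite size_poly_gt0.
Qed.

Lemma resultant_eq0_root (C : closedFieldType) (p q : {poly C}) :
  p != 0 -> resultant p q = 0 <-> exists2 x, root p x & root q x.
Proof.
move=> p_neq0; split.
  move/eqP; rewrite resultant_eq0 => gt1_gcd; have [x] : exists x, root (gcdp p q) x.
    by apply/closed_rootP; rewrite neq_ltn gt1_gcd orbT.
  by rewrite -dvdp_XsubCl dvdp_gcd !dvdp_XsubCl => /andP[]; exists x.
case=> x px qx; apply/eqP; rewrite resultant_eq0.
have : ('X - x%:P) %| gcdp p q by rewrite dvdp_gcd !dvdp_XsubCl px.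
by move/dvdp_leq; rewrite gcdp_eq0 negb_and p_neq0 size_XsubC; apply.
Qed.

Lemma root_prod_XsubCP (R : idomainType) (I : finType) (P : pred I) (r : I -> R) x :
  root (\prod_(i | P i) ('X - (r i)%:P)) x <-> exists2 i, P i & x = r i.
Proof.
rewrite /root horner_prod; split.
  by case/prodf_eq0=> i Pi; rewrite hornerXsubC subr_eq0 => /eqP->; exists i.
by case=> i Pi ->; apply/prodf_eq0; exists i; rewrite ?hornerXsubC ?subrr.
Qed.

Section Specialization.
Variable C : fieldType.
Implicit Types (f : {poly C}) (a c : C).

Definition mid a : {poly C} := (a%:P + 'X) * (2%:R^-1)%:P.

Lemma at_x_polyCC a c : at_x a c%:P%:P = c%:P.
Proof. by rewrite map_polyC /= horner_evalE hornerC. Qed.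

Lemma at_x_varx a : at_x a (varx C) = a%:P.
Proof. by rewrite map_polyC /= horner_evalE hornerX. Qed.

Lemma at_x_liftC2 a f : at_x a (liftC2 f) = f.
Proof.
rewrite /liftC2 -map_poly_comp map_poly_id // => c _ /=.
by rewrite horner_evalE hornerC.
Qed.

Lemma at_x_f_at_y a f : at_x a (f_at_y f) = f.
Proof. by rewrite /f_at_y /vary comp_polyXr at_x_liftC2. Qed.

Lemma at_x_f_at_x a f : at_x a (f_at_x f) = f.[a]%:P.
Proof. by rewrite /f_at_x map_comp_poly at_x_liftC2 at_x_varx comp_polyCr. Qed.

Lemma at_x_f_at_mid a f : at_x a (f_at_mid f) = f \Po mid a.
Proof.
by rewrite /f_at_mid map_comp_poly at_x_liftC2 rmorphM rmorphD /= at_x_varx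
  at_x_polyCC /vary map_polyX.
Qed.

Lemma at_x_vary_sub_varxXn a k :
  at_x a ((vary C - varx C) ^+ k) = ('X - a%:P) ^+ k.
Proof. by rewrite rmorphXn rmorphB /= map_polyX at_x_varx. Qed.

Lemma monic_vary_sub_varx : vary C - varx C \is monic.
Proof. exact: monicXsubC. Qed.

Lemma at_x_f1 a f : at_x a (f1 f) = (f - f.[a]%:P) %/ ('X - a%:P).
Proof.
by rewrite /f1 map_divp_monic ?monic_vary_sub_varx // -[vary C - _]expr1 at_x_vary_sub_varxXn
  expr1 rmorphB /= at_x_f_at_y at_x_f_at_x.
Qed.

Lemma at_x_f3 a f :
  at_x a (f3 f) = (2%:R * (f - 2%:R * (f \Po mid a) + f.[a]%:P)) %/ ('X - a%:P) ^+ 2.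
Proof.
rewrite /f3 map_divp_monic ?monic_exp ?monic_vary_sub_varx //.
(* Folding the constant keeps rmorphD from splitting 2 = 1 + 1. *)
set two := (2%:R%:P%:P : {poly {poly C}}).
by rewrite at_x_vary_sub_varxXn rmorphM rmorphD rmorphB rmorphM /= /two !at_x_polyCC
  at_x_f_at_y at_x_f_at_mid at_x_f_at_x polyC_natr.
Qed.

Lemma size_f_at_mid f : (size (f_at_mid f) <= maxn (size f) 1)%N.
Proof.
have le_mid : ((size ((varx C + vary C) * (2%:R^-1)%:P%:P)%R).-1 <= 1)%N.
  rewrite mulrC mul_polyC -subn1 leq_subLR (leq_trans (size_scale_leq _ _)) //.
  by rewrite /varx /vary addrC size_XaddC.
rewrite /f_at_mid (leq_trans (size_comp_poly_leq _ _)) // /liftC2 size_map_polyC.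
apply: leq_ltn_trans (leq_mul (leqnn _) le_mid) _.
by rewrite muln1; case: (size f).
Qed.

Lemma size_f_at_y f : size (f_at_y f) = size f.
Proof. by rewrite /f_at_y /vary comp_polyXr /liftC2 size_map_polyC. Qed.

Lemma size_f_at_x f : (size (f_at_x f) <= 1)%N.
Proof. by rewrite /f_at_x /varx comp_polyCr size_polyC leq_b1. Qed.

Lemma size_f1 f : (size (f1 f) <= (size f).-1)%N.
Proof.
rewrite /f1 size_divp ?monic_neq0 ?monic_vary_sub_varx // size_XsubC /= -subn1.
apply: (@leq_trans (maxn (size f) 1 - 1)); last by case: (size f).
rewrite leq_sub2r // (leq_trans (size_polyD _ _)) // size_polyN size_f_at_y.
by rewrite geq_max leq_maxl (leq_trans (size_f_at_x f)) ?leq_maxr.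
Qed.

Lemma size_f3 f : (size (f3 f) <= size f - 2)%N.
Proof.
rewrite /f3 size_divp ?monic_neq0 ?monic_exp ?monic_vary_sub_varx //.
rewrite size_exp_XsubC /=.
apply: (@leq_trans (maxn (size f) 1 - 2)); last by case: (size f) => [|[]].
rewrite leq_sub2r // mul_polyC (leq_trans (size_scale_leq _ _)) //.
rewrite (leq_trans (size_polyD _ _)) // geq_max (leq_trans (size_f_at_x f)) ?leq_maxr //.
rewrite (leq_trans (size_polyD _ _)) // geq_max size_f_at_y leq_maxl size_polyN.
by rewrite mul_polyC (leq_trans (size_scale_leq _ _)) ?size_f_at_mid.
Qed.

End Specialization.

Section CharacteristicZero.
Variable C : numFieldType.
Implicit Types (f q : {poly C}) (a b : C).

Lemma horner_mid a b : (mid a).[b] = (a + b) / 2%:R.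
Proof. by rewrite /mid hornerM hornerD !hornerC hornerX. Qed.

Lemma mid_id a : (mid a).[a] = a.
Proof. by rewrite horner_mid -mulr2n -[a *+ 2]mulr_natr mulfK ?pnatr_eq0. Qed.

Lemma half_sum_eq a b (c : C) :
  ((a + b) / 2%:R == c) = (2%:R * c - a - b == 0).
Proof.
have -> : 2%:R * c - a - b = - 2%:R * ((a + b) / 2%:R - c) by field.
by rewrite mulf_eq0 oppr_eq0 pnatr_eq0 subr_eq0.
Qed.

Lemma second_difference_factor a b q (f := ('X - a%:P) * (('X - b%:P) * q)) :
  exists2 T, T * ('X - a%:P) ^+ 2 = 2%:R * (f - 2%:R * (f \Po mid a))
           & T.[b] = q.[(a + b) / 2%:R].
Proof.
have [s Es] : exists s, q = (q \Po mid a) + s * ('X - a%:P).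
  have /factor_theorem [s Es] : root (q - (q \Po mid a)) a.
    by apply/rootP; rewrite hornerD hornerN horner_comp mid_id subrr.
  by exists s; rewrite -Es addrC subrK.
exists (2%:R * ('X - b%:P) * s + (q \Po mid a)); last first.
  by rewrite hornerD !hornerM hornerXsubC subrr mulr0 mul0r add0r horner_comp horner_mid.
have X_mid : 'X = 2%:R * mid a - a%:P.
  by rewrite /mid mulrCA -polyC_natr -polyCM mulfV ?pnatr_eq0 // polyC1 mulr1 addrC addKr.
rewrite /f !comp_polyM !comp_polyB comp_polyX !comp_polyC.
(* Eliminating 'X through X_mid leaves a ring identity in mid a, q \Po mid a and s. *)
move: (mid a) (q \Po mid a) Es X_mid => m Q -> ->; ring.
Qed.

Lemma size_mid a : size (mid a) = 2.
Proof. by rewrite /mid mulrC mul_polyC size_scale ?invr_eq0 ?pnatr_eq0 // addrC size_XaddC. Qed.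

Lemma lead_coef_mid a : lead_coef (mid a) = 2%:R^-1.
Proof. by rewrite /mid mulrC mul_polyC lead_coefZ addrC lead_coefXaddC mulr1. Qed.

Lemma half_expn_double_neq1 d : d != 1%N -> (2%:R^-1 ^+ d) *+ 2 != 1 :> C.
Proof.
apply: contra => /eqP half_d; rewrite -(@eqn_exp2l 2) // -(eqr_nat C) !natrX expr1.
have -> : (2%:R : C) ^+ d = 2%:R ^+ d * ((2%:R^-1 ^+ d) *+ 2) by rewrite half_d mulr1.
by rewrite mulrnAr -exprMn mulfV ?pnatr_eq0 // expr1n.
Qed.

Lemma size_second_difference a f : f \is monic -> (3 <= size f)%N ->
  size (f - 2%:R * (f \Po mid a)) = size f.
Proof.
move=> mon_f ge3_f; set d := (size f).-1.
have size_f : size f = d.+1 by rewrite /d prednK // (leq_trans _ ge3_f).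
have size_comp : size (f \Po mid a) = size f := size_comp_poly2 _ (size_mid a).
have coef_f : f`_d = 1 by rewrite /d -lead_coefE (eqP mon_f).
have coef_comp : (f \Po mid a)`_d = 2%:R^-1 ^+ d.
  rewrite /d -size_comp -lead_coefE lead_coef_comp ?size_mid //.
  by rewrite (eqP mon_f) mul1r lead_coef_mid size_comp.
have coef_d : (f - 2%:R * (f \Po mid a))`_d = 1 - (2%:R^-1 ^+ d) *+ 2.
  by rewrite coefB mulr_natl coefMn coef_f coef_comp.
have coef_d_neq0 : (f - 2%:R * (f \Po mid a))`_d != 0.
  by rewrite coef_d subr_eq0 eq_sym half_expn_double_neq1 // gtn_eqF // -ltnS -size_f.
apply/eqP; rewrite eqn_leq; apply/andP; split.
  rewrite (leq_trans (size_polyD _ _)) // size_polyN geq_max leqnn /=.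
  by rewrite -polyC_natr mul_polyC (leq_trans (size_scale_leq _ _)) ?size_comp.
by rewrite size_f ltnNge; apply: contra coef_d_neq0 => /leq_sizeP->.
Qed.

Lemma at_x_f3_factor a b q (f := ('X - a%:P) * (('X - b%:P) * q)) :
  at_x a (f3 f) * ('X - a%:P) ^+ 2 = 2%:R * (f - 2%:R * (f \Po mid a))
  /\ (at_x a (f3 f)).[b] = q.[(a + b) / 2%:R].
Proof.
have [T eq_T horner_T] := second_difference_factor a b q.
suff -> : at_x a (f3 f) = T by [].
have root_f : f.[a] = 0 by rewrite /f hornerM hornerXsubC subrr mul0r.
by rewrite at_x_f3 root_f addr0 -eq_T mulpK ?expf_neq0 ?polyXsubC_eq0.
Qed.

Lemma size_at_x_f3 a b q (f := ('X - a%:P) * (('X - b%:P) * q)) :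
  f \is monic -> (4 <= size f)%N -> size (at_x a (f3 f)) = (size f - 2)%N.
Proof.
move=> mon_f ge4_f; have [eq_f3 _] := at_x_f3_factor a b q.
have size_rhs : size (2%:R * (f - 2%:R * (f \Po mid a))) = size f.
  by rewrite -{1}polyC_natr mul_polyC size_scale ?pnatr_eq0 // size_second_difference // ltnW.
have f3_neq0 : at_x a (f3 f) != 0.
  by apply: contraTneq ge4_f => f3_0; rewrite -size_rhs -eq_f3 f3_0 mul0r size_poly0.
by rewrite -size_rhs -eq_f3 size_Mmonic ?monic_exp ?monicXsubC // size_exp_XsubC addnS addnK.
Qed.

Lemma horner_resultant_f1_f3 a b q (f := ('X - a%:P) * (('X - b%:P) * q)) :
  f \is monic -> (4 <= size f)%N ->
  (resultant (f1 f) (f3 f)).[a] = resultant (('X - b%:P) * q) (at_x a (f3 f)).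
Proof.
move=> mon_f ge4_f; set h := ('X - b%:P) * q.
have h_neq0 : h != 0 by apply: contra_neq (monic_neq0 mon_f) => h0; rewrite /f -/h h0 mulr0.
have at_x_f1_eq : at_x a (f1 f) = h.
  have root_f : f.[a] = 0 by rewrite /f hornerM hornerXsubC subrr mul0r.
  by rewrite at_x_f1 root_f subr0 mulKp ?polyXsubC_eq0.
have size_f : size f = (size h).+1.
  by rewrite /f -/h [LHS]size_mul ?polyXsubC_eq0 // size_XsubC.
have neq0_of_at_x P : (0 < size (at_x a P))%N -> P != 0.
  by apply: contraTneq => ->; rewrite map_poly0 size_poly0.
have size_at_x_f3_eq := size_at_x_f3 mon_f ge4_f.
have le_f1 : (size (f1 f) <= size (at_x a (f1 f)))%N.
  by rewrite at_x_f1_eq (leq_trans (size_f1 f)) ?size_f.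
have le_f3 : (size (f3 f) <= size (at_x a (f3 f)))%N by rewrite size_at_x_f3_eq size_f3.
have f1_neq0 : f1 f != 0 by apply: neq0_of_at_x; rewrite at_x_f1_eq size_poly_gt0.
have f3_neq0 : f3 f != 0.
  by apply: neq0_of_at_x; rewrite size_at_x_f3_eq subn_gt0 (leq_trans _ ge4_f).
rewrite -horner_evalE map_resultant; first by rewrite -at_x_f1_eq.
  exact: lead_coef_map_neq0 le_f1 f1_neq0.
exact: lead_coef_map_neq0 le_f3 f3_neq0.
Qed.

End CharacteristicZero.

Lemma D2_eq0 (C : fieldType) n (r : 'I_n -> C) :
  D2 r = 0 <-> exists i j k, [/\ j != i, k != i, k != j & 2%:R * r k - r i - r j = 0].
Proof.
split.
  rewrite /D2 => /eqP/prodf_eq0[i _ /prodf_eq0[j _ /prodf_eq0[k]]].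
  case/andP=> /andP[lt_ij ne_jk] ne_ki /eqP eq0.
  exists i, j, k; split=> //; last by rewrite eq_sym.
  by rewrite -val_eqE /= gtn_eqF.
case=> i [j [k [ne_ji ne_ki ne_kj eq0]]].
wlog lt_ij : i j ne_ji ne_ki ne_kj eq0 / (i < j)%N.
  move=> gen; move: (ne_ji); rewrite -val_eqE neq_ltn => /orP[lt_ji|lt_ij].
    by apply: (gen j i); rewrite // 1?eq_sym 1?addrAC.
  exact: gen ne_ji ne_ki ne_kj eq0 lt_ij.
apply/eqP/prodf_eq0; exists i => //; apply/prodf_eq0; exists j => //.
by apply/prodf_eq0; exists k; rewrite ?eq0 // lt_ij eq_sym ne_kj ne_ki.
Qed.

Section ProductOfLinearFactors.
Variables (C : numClosedFieldType) (n : nat) (r : 'I_n -> C).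

Local Notation f := (\prod_(k < n) ('X - (r k)%:P)).
Local Notation q i j := (\prod_(k < n | (k != i) && (k != j)) ('X - (r k)%:P)).

Lemma prod_XsubC_bigD2 i j :
  j != i -> f = ('X - (r i)%:P) * (('X - (r j)%:P) * q i j).
Proof. by move=> ne_ji; rewrite (bigD1 i) //= (bigD1 j). Qed.

Lemma root_at_x_f3_prod_XsubC i j : j != i ->
  root (at_x (r i) (f3 f)) (r j) <->
  exists2 k, (k != i) && (k != j) & 2%:R * r k - r i - r j = 0.
Proof.
move=> ne_ji; rewrite rootE (prod_XsubC_bigD2 ne_ji) (at_x_f3_factor _ _ _).2 -rootE.
rewrite root_prod_XsubCP; split=> -[k P_k eq_k]; exists k => //; apply/eqP.
  by rewrite -half_sum_eq eq_k.
by rewrite half_sum_eq eq_k.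
Qed.

Lemma horner_resultant_f1_f3_eq0 i : (3 <= n)%N ->
  (resultant (f1 f) (f3 f)).[r i] = 0 <->
  exists2 j, j != i & root (at_x (r i) (f3 f)) (r j).
Proof.
move=> ge3_n; have [j0 ne_j0i] : exists j : 'I_n, j != i.
  have lt0_n : (0 < n)%N by apply: leq_trans ge3_n.
  have lt1_n : (1 < n)%N by apply: leq_trans ge3_n.
  have [->|ne_i0] := eqVneq i (Ordinal lt0_n); first by exists (Ordinal lt1_n).
  by exists (Ordinal lt0_n); rewrite eq_sym.
have mon_f : f \is monic by apply: monic_prod_XsubC.
have ge4_f : (4 <= size f)%N by rewrite -big_enum size_prod_XsubC size_enum_ord.
have := horner_resultant_f1_f3 (a := r i) (b := r j0) (q := q i j0).
rewrite -(prod_XsubC_bigD2 ne_j0i) => /(_ mon_f ge4_f) ->.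
rewrite -(bigD1 j0 (P := fun k => k != i)) //.
rewrite resultant_eq0_root ?monic_neq0 ?monic_prod_XsubC //; split.
  by case=> _ /root_prod_XsubCP[j ne_ji ->]; exists j.
by case=> j ne_ji root_j; exists (r j) => //; apply/root_prod_XsubCP; exists j.
Qed.

End ProductOfLinearFactors.

Theorem proposition5 (C : numClosedFieldType) (n : nat) (hn : (3 <= n)%N)
  (f : {poly C}) (r : 'I_n -> C)
  (hf : f = \prod_(i < n) ('X - (r i)%:P)) :
  resultant f (resultant (f1 f) (f3 f)) = 0 <-> D2 r = 0.
Proof.
subst f; rewrite resultant_eq0_root ?monic_neq0 ?monic_prod_XsubC // D2_eq0; split.
  case=> _ /root_prod_XsubCP[i _ ->] /rootP /(horner_resultant_f1_f3_eq0 r i hn).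
  case=> j ne_ji /(root_at_x_f3_prod_XsubC r ne_ji)[k /andP[ne_ki ne_kj] eq0].
  by exists i, j, k.
case=> i [j [k [ne_ji ne_ki ne_kj eq0]]].
exists (r i); first by apply/root_prod_XsubCP; exists i.
apply/rootP/(horner_resultant_f1_f3_eq0 r i hn); exists j => //.
by apply/(root_at_x_f3_prod_XsubC r ne_ji); exists k; rewrite ?ne_ki.
Qed.
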